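(* Let $\mathsf V$ be a quantale, $X=(X,a)$ a $\mathsf V$-category, $s=(x_n)_{n\in\mathbb N}$ a Cauchy sequence in $X$ and $x\in X$ such that $\varphi_s=x_*$ and $\psi_s=x^*$, i.e. $\varphi_s(y)=a(x,y)$ and $\psi_s(y)=a(y,x)$ for all $y\in X$. Then $s$ converges to $x$.
   Context: A quantale $(\mathsf V,\otimes,k)$ is a complete anti-symmetric lattice with an associative, commutative operation $\otimes$ with neutral element $k$ distributing over arbitrary suprema. A $\mathsf V$-category $(X,a)$ is a set with $a:X\times X\to\mathsf V$ such that $k\le a(x,x)$ and $a(x,y)\otimes a(y,z)\le a(x,z)$. For a sequence $s=(x_n)$: $\mathrm{Cauchy}(s)=\bigvee_N\bigwedge_{n,m\ge N}a(x_n,x_m)$, $s$ is Cauchy if $k\le\mathrm{Cauchy}(s)$; $\varphi_s(y)=\bigvee_N\bigwedge_{n\ge N}a(x_n,y)$ and $\psi_s(y)=\bigvee_N\bigwedge_{n\ge N}a(y,x_n)$. For $M\subseteq X$, $\overline M=\{x\in X\mid k\le\bigvee_{y\in M}a(x,y)\otimes a(y,x)\}$. A sequence $s$ converges to $x$ if $x\in\overline{\{x_n\mid n\in M\}}$ for every infinite $M\subseteq\mathbb N$. *)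

From Stdlib Require Import Arith.

Set Implicit Arguments.

Record quantale := Quantale {
  qcar :> Type;
  qle : qcar -> qcar -> Prop;
  qle_refl : forall x, qle x x;
  qle_trans : forall x y z, qle x y -> qle y z -> qle x z;
  qle_antisym : forall x y, qle x y -> qle y x -> x = y;
  qsup : (qcar -> Prop) -> qcar;
  qsup_ub : forall (S : qcar -> Prop) x, S x -> qle x (qsup S);
  qsup_least : forall (S : qcar -> Prop) y,
      (forall x, S x -> qle x y) -> qle (qsup S) y;
  qtens : qcar -> qcar -> qcar;
  qtens_assoc : forall x y z, qtens x (qtens y z) = qtens (qtens x y) z;
  qtens_comm : forall x y, qtens x y = qtens y x;
  qk : qcar;
  qtens_k : forall x, qtens qk x = x;
  qtens_sup : forall x (S : qcar -> Prop),
      qtens x (qsup S) = qsup (fun z => exists y, S y /\ z = qtens x y)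
}.

Arguments qle {q} _ _.
Arguments qsup {q} _.
Arguments qtens {q} _ _.
Arguments qk {q}.

Section Defs.
Variable V : quantale.

Definition qinf (S : V -> Prop) : V :=
  qsup (fun y : V => forall x, S x -> qle y x).

Definition is_Vcat (X : Type) (a : X -> X -> V) : Prop :=
  (forall x, qle (@qk V) (a x x)) /\
  (forall x y z, qle (qtens (a x y) (a y z)) (a x z)).

Variables (X : Type) (a : X -> X -> V).

Definition Cauchy_val (s : nat -> X) : V :=
  qsup (fun v : V => exists N, v =
    qinf (fun w => exists n m, N <= n /\ N <= m /\ w = a (s n) (s m))).

Definition is_Cauchy (s : nat -> X) : Prop := qle (@qk V) (Cauchy_val s).

Definition phi_s (s : nat -> X) (y : X) : V :=
  qsup (fun v : V => exists N, v = qinf (fun w => exists n, N <= n /\ w = a (s n) y)).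

Definition psi_s (s : nat -> X) (y : X) : V :=
  qsup (fun v : V => exists N, v = qinf (fun w => exists n, N <= n /\ w = a y (s n))).

Definition Vclosure (M : X -> Prop) (x : X) : Prop :=
  qle (@qk V) (qsup (fun v : V => exists y, M y /\ v = qtens (a x y) (a y x))).

Definition infinite_nat (M : nat -> Prop) : Prop :=
  forall N, exists n, N <= n /\ M n.

Definition converges (s : nat -> X) (x : X) : Prop :=
  forall M : nat -> Prop, infinite_nat M ->
    Vclosure (fun y => exists n, M n /\ y = s n) x.

End Defs.

Arguments is_Vcat {V X} a.
Arguments Cauchy_val {V X} a s.
Arguments is_Cauchy {V X} a s.
Arguments phi_s {V X} a s y.
Arguments psi_s {V X} a s y.
Arguments Vclosure {V X} a M x.
Arguments converges {V X} a s x.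

(* Since [x] is the limit of [s] from both sides, [k <= a(x,x) (x) a(x,x)]
   equals [psi_s(x) (x) phi_s(x)], a supremum over pairs [N, N'] of
   [inf_{n >= N} a(x,x_n) (x) inf_{n >= N'} a(x_n,x)].  For an infinite [M]
   pick [n] in [M] beyond [N] and [N']: each such term is then below
   [a(x,x_n) (x) a(x_n,x)], one of the terms defining the closure of
   [{x_n | n in M}]. *)
From Stdlib Require Import Arith Lia.

Section QuantaleFacts.
Variable V : quantale.

Lemma qtens_monotone_r (z x y : V) : qle x y -> qle (qtens z x) (qtens z y).
Proof.
  intro Hxy.
  assert (Esup : qsup (fun w : V => w = x \/ w = y) = y).
  { apply qle_antisym.
    - apply qsup_least. intros w [-> | ->]; [exact Hxy | apply qle_refl].
    - apply qsup_ub. right; reflexivity. }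
  rewrite <- Esup, qtens_sup. apply qsup_ub.
  exists x. split; [left |]; reflexivity.
Qed.

Lemma qtens_monotone (x y x' y' : V) :
  qle x x' -> qle y y' -> qle (qtens x y) (qtens x' y').
Proof.
  intros Hx Hy. apply qle_trans with (qtens x y').
  - apply qtens_monotone_r, Hy.
  - rewrite (qtens_comm _ x), (qtens_comm _ x'). apply qtens_monotone_r, Hx.
Qed.

Lemma qk_le_qtens (u v : V) : qle qk u -> qle qk v -> qle qk (qtens u v).
Proof.
  intros Hu Hv. rewrite <- (qtens_k _ qk). apply qtens_monotone; assumption.
Qed.

Lemma qtens_qsup_le (S T : V -> Prop) (b : V) :
  (forall u v, S u -> T v -> qle (qtens u v) b) ->
  qle (qtens (qsup S) (qsup T)) b.
Proof.
  intro H. rewrite qtens_sup. apply qsup_least.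
  intros z [v [Tv ->]]. rewrite qtens_comm, qtens_sup. apply qsup_least.
  intros z [u [Su ->]]. rewrite qtens_comm. apply H; assumption.
Qed.

Lemma qinf_lb (S : V -> Prop) (w : V) : S w -> qle (qinf V S) w.
Proof.
  intro Sw. apply qsup_least. intros y Hy. apply Hy, Sw.
Qed.

End QuantaleFacts.

Section Convergence.
Variables (V : quantale) (X : Type) (a : X -> X -> V).

Lemma psi_tens_phi_le_closure_sup (s : nat -> X) (M : nat -> Prop) (x : X) :
  infinite_nat M ->
  qle (qtens (psi_s a s x) (phi_s a s x))
      (qsup (fun v => exists y, (exists n, M n /\ y = s n) /\
                                v = qtens (a x y) (a y x))).
Proof.
  intro HM. apply qtens_qsup_le. intros u v [N ->] [N' ->].
  destruct (HM (N + N')) as [n [Hn Mn]].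
  apply qle_trans with (qtens (a x (s n)) (a (s n) x)).
  - apply qtens_monotone; apply qinf_lb; exists n; (split; [lia | reflexivity]).
  - apply qsup_ub. exists (s n). split; [exists n; split |]; auto.
Qed.

Lemma converges_of_qk_le_psi_tens_phi (s : nat -> X) (x : X) :
  qle qk (qtens (psi_s a s x) (phi_s a s x)) -> converges a s x.
Proof.
  intros Hk M HM. eapply qle_trans; [exact Hk |].
  apply psi_tens_phi_le_closure_sup, HM.
Qed.

End Convergence.

Theorem proposition3p16 (V : quantale) (X : Type) (a : X -> X -> V)
  (Hcat : is_Vcat a) (s : nat -> X) (x : X)
  (Hcauchy : is_Cauchy a s)
  (Hphi : forall y, phi_s a s y = a x y)
  (Hpsi : forall y, psi_s a s y = a y x) :
  converges a s x.
Proof.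
  apply converges_of_qk_le_psi_tens_phi.
  rewrite Hpsi, Hphi.
  destruct Hcat as [Hrefl _].
  apply qk_le_qtens; apply Hrefl.
Qed.
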